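(* Let $G$ be a tree with vertices $1,2,\ldots,n$ and edges $e_1,\ldots,e_{n-1}$, and let $M$ be its $n\times(n-1)$ vertex-edge incidence matrix. Define the $(n-1)\times n$ matrix $H=[h_{i,j}]$ (rows indexed by edges, columns by vertices) by $$h_{i,j}=\frac{(-1)^{d(e_i,j)}}{n}\begin{cases}|G_T(e_i)| & \text{if } j\in G_H(e_i),\\ |G_H(e_i)| & \text{if } j\in G_T(e_i).\end{cases}$$ Then $H$ is the Moore-Penrose inverse $M^+$ of $M$.
   Context: Each edge is written $e_i=\{l_i,m_i\}$ with $l_i<m_i$. The incidence matrix $M$ has $(i,j)$-entry $1$ if vertex $i$ is incident with edge $e_j$ and $0$ otherwise. $d(u,v)$ denotes the usual graph distance between vertices; for a vertex $j$ and edge $e_i=\{l_i,m_i\}$, $d(j,e_i)=d(e_i,j):=\min\{d(j,l_i),d(j,m_i)\}$. The head component $G_H(e_i)$ is the connected component of $G\setminus e_i$ containing $m_i$; the tail component $G_T(e_i)$ is the component of $G\setminus e_i$ containing $l_i$. $|X|$ denotes the number of vertices of a graph $X$. The Moore-Penrose inverse of a real $p\times q$ matrix $A$ is the unique $q\times p$ real matrix $A^+$ with $AA^+A=A$, $A^+AA^+=A^+$, $(AA^+)^T=AA^+$, $(A^+A)^T=A^+A$. *)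

From HB Require Import structures.
From mathcomp Require Import all_boot all_order all_algebra.
Set Implicit Arguments. Unset Strict Implicit. Unset Printing Implicit Defensive.
Import Order.TTheory GRing.Theory Num.Theory.
Local Open Scope ring_scope.

(* A graph on vertex set 'I_n with edges indexed by 'I_k; edge e_i = {l i, m i}. *)
Section Graph.
Variables (n k : nat) (l m : 'I_k -> 'I_n).

Definition adj : rel 'I_n :=
  [rel u v | [exists i, ((l i == u) && (m i == v)) || ((l i == v) && (m i == u))]].

Definition adj_wo (i : 'I_k) : rel 'I_n :=
  [rel u v | [exists i', (i' != i) &&
     (((l i' == u) && (m i' == v)) || ((l i' == v) && (m i' == u)))]].

Definition simple_edges : Prop :=
  (forall i, (l i < m i)%N) /\
  (forall i i', l i = l i' -> m i = m i' -> i = i').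

Definition connected_graph : Prop := forall u v, connect adj u v.

(* A tree: a connected simple graph (on n vertices with exactly n-1 edges,
   enforced by the choice k = n.-1 in the theorem). *)
Definition is_tree : Prop := simple_edges /\ connected_graph.

Fixpoint walkb (t : nat) (u v : 'I_n) : bool :=
  if t is t'.+1 then [exists w, adj u w && walkb t' w v] else u == v.

(* graph distance: least t with a walk of length t from u to v
   (in a connected graph on n vertices it is < n) *)
Definition dist (u v : 'I_n) : nat := find (fun t => walkb t u v) (iota 0 n).

Definition dist_ve (j : 'I_n) (i : 'I_k) : nat := minn (dist j (l i)) (dist j (m i)).

Definition headC (i : 'I_k) : {set 'I_n} := [set j | connect (adj_wo i) (m i) j].
Definition tailC (i : 'I_k) : {set 'I_n} := [set j | connect (adj_wo i) (l i) j].

End Graph.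

Definition incidence (R : pzRingType) n k (l m : 'I_k -> 'I_n) : 'M[R]_(n, k) :=
  \matrix_(j, i) ((j == l i) || (j == m i))%:R.

Definition Hmat (R : fieldType) n k (l m : 'I_k -> 'I_n) : 'M[R]_(k, n) :=
  \matrix_(i, j)
    ((-1) ^+ dist_ve l m j i / n%:R *
     (if j \in headC l m i then (#|tailC l m i|)%:R
      else if j \in tailC l m i then (#|headC l m i|)%:R else 0)).

Definition moore_penrose (R : pzRingType) p q (A : 'M[R]_(p, q)) (X : 'M[R]_(q, p)) : Prop :=
  [/\ A *m X *m A = A, X *m A *m X = X,
      (A *m X)^T = A *m X & (X *m A)^T = X *m A].

(* A tree is bipartite: with [s] the sign vector of its 2-colouring,
   (-1)^d(u,v) = s_u s_v.  Every edge e_i is a bridge, since a connected graph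
   on n vertices has at least n - 1 edges (its oriented incidence matrix has
   rank n - 1), so G \ e_i splits into G_H(e_i) and G_T(e_i), and for j in
   G_H(e_i) we get d(j, e_i) = d(j, m_i) = d(j, l_i) - 1 (symmetrically for
   G_T(e_i)).  With these explicit entries a direct computation gives HM = I,
   Hs = 0, s^T M = 0 and s^T s = n.  Hence [s^T / n; H] is a left, thus a
   right, inverse of the square matrix [s M], i.e. MH = I - s s^T / n, which
   is symmetric; the four Penrose equations follow. *)

From Pilot Require Import Defs.
From mathcomp Require Import all_boot all_order all_algebra zify ring.
Set Implicit Arguments. Unset Strict Implicit. Unset Printing Implicit Defensive.
Import Order.TTheory GRing.Theory Num.Theory.

Section Walks.
Variables (n k : nat) (l m : 'I_k -> 'I_n).
Local Notation adj := (adj l m).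
Local Notation adj_wo := (adj_wo l m).
Local Notation walkb := (walkb l m).
Local Notation dist := (dist l m).

Lemma adj_edge i : adj (l i) (m i).
Proof. by apply/existsP; exists i; rewrite !eqxx. Qed.

Lemma adj_sym : symmetric adj.
Proof. by move=> x y; apply/existsP/existsP => -[i Hi]; exists i; rewrite orbC. Qed.

Lemma adj_wo_sym i : symmetric (adj_wo i).
Proof.
by move=> x y; apply/existsP/existsP => -[j /andP[ji Hj]]; exists j; rewrite ji orbC.
Qed.

Lemma adj_woP i x y : adj x y ->
  [\/ adj_wo i x y, x = l i /\ y = m i | x = m i /\ y = l i].
Proof.
case/existsP=> j; have [<-|ji] := eqVneq i j => Hj.
  by case/orP: Hj => /andP[/eqP-> /eqP->]; [apply: Or32 | apply: Or33].
by apply: Or31; apply/existsP; exists j; rewrite eq_sym ji.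
Qed.

Lemma adj_wo_lift i : adj_wo i =2 Defs.adj (l \o lift i) (m \o lift i).
Proof.
move=> x y; apply/existsP/existsP => [[j /andP[ji]] | [j Hj]].
  by rewrite eq_sym in ji; have [j' ->] := unlift_some ji; exists j'.
by exists (lift i j); rewrite eq_sym neq_lift.
Qed.

Lemma walkb_cat s t u v w : walkb s u v -> walkb t v w -> walkb (s + t) u w.
Proof.
elim: s u => [|s IH] u /=; first by move/eqP->.
case/existsP=> x /andP[ux xv] vw; apply/existsP; exists x.
by rewrite ux (IH _ xv vw).
Qed.

Lemma walkb_path u p : path adj u p -> walkb (size p) u (last u p).
Proof.
elim: p u => [|x p IH] u //= /andP[ux up].
by apply/existsP; exists x; rewrite ux IH.
Qed.

Lemma dist_le t u v : walkb t u v -> (dist u v <= t)%N.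
Proof.
move=> W; have [tn|nt] := ltnP t n.
  rewrite leqNgt; apply/negP => /(before_find 0%N).
  by rewrite nth_iota // add0n W.
by apply: leq_trans (find_size _ _) _; rewrite size_iota.
Qed.

Lemma dist0 u : dist u u = 0%N.
Proof. by apply/eqP; rewrite -leqn0; apply: (@dist_le 0) => /=. Qed.

Hypothesis connected : connected_graph l m.

Lemma connected_walkb u v : exists2 t, (t < n)%N & walkb t u v.
Proof.
have /connectP[p up ->] := connected u v.
have [p' up' uniq_p' _] := shortenP up.
exists (size p'); last exact: walkb_path.
by have := max_card (mem (u :: p')); rewrite card_ord (card_uniqP uniq_p').
Qed.

Lemma dist_walkb u v : walkb (dist u v) u v.
Proof.
have [t tn W] := connected_walkb u v.
have has_walk : has (fun t => walkb t u v) (iota 0 n).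
  by apply/hasP; exists t; rewrite ?mem_iota.
have := nth_find 0%N has_walk; rewrite nth_iota ?add0n //.
by move: has_walk; rewrite has_find size_iota.
Qed.

End Walks.

Local Open Scope ring_scope.

Lemma sum_delta (R : pzSemiRingType) (I : finType) (F : I -> R) a :
  \sum_j F j * (j == a)%:R = F a.
Proof.
by rewrite (bigD1 a) //= eqxx mulr1 big1 ?addr0 // => j /negbTE->; rewrite mulr0.
Qed.

(* The left kernel of the oriented incidence matrix [N] of a connected graph
   consists of the constant vectors, so [N] has rank [n]. *)
Lemma connected_edges_ge (n k : nat) (l m : 'I_k -> 'I_n.+1) :
  connected_graph l m -> (n <= k)%N.
Proof.
move=> connected.
pose N : 'M[rat]_(n.+1, k) := \matrix_(j, i) ((j == l i)%:R - (j == m i)%:R).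
suff : (\rank (kermx N) <= 1)%N.
  by rewrite mxrank_ker; have := rank_leq_col N; lia.
apply: leq_trans (rank_leq_row (const_mx 1 : 'rV[rat]_n.+1)).
apply/mxrankS/row_subP => r; set u := row r _.
have uN : u *m N = 0 by rewrite -row_mul mulmx_ker row0.
have u_edge x y : adj l m x y -> u 0 x = u 0 y.
  case/existsP=> i /orP[] /andP[/eqP<- /eqP<-]; have /rowP/(_ i) := uN;
  rewrite !mxE; under eq_bigr do rewrite !mxE mulrBr;
  by rewrite sumrB !sum_delta => /eqP; rewrite subr_eq0 => /eqP.
have u_closed : closed (adj l m) [pred x | u 0 x == u 0 ord0].
  by move=> x y /u_edge; rewrite !inE => ->.
have {}u_const j : u 0 j = u 0 ord0.
  have := closed_connect u_closed (connected ord0 j).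
  by rewrite !inE eqxx => /esym/eqP.
have -> : u = u 0 ord0 *: const_mx 1.
  by apply/rowP => j; rewrite [RHS]mxE [const_mx _ _ _]mxE mulr1 u_const.
exact/scalemx_sub/submx_refl.
Qed.

Section Tree.
Variables (n : nat) (l m : 'I_n -> 'I_n.+1).
Hypothesis tree : is_tree l m.
Local Notation adj := (adj l m).
Local Notation adj_wo := (adj_wo l m).
Local Notation dist := (dist l m).
Local Notation headC := (headC l m).
Local Notation tailC := (tailC l m).

Let connected : connected_graph l m := tree.2.

Lemma adj_wo_connect_sym i : connect_sym (adj_wo i).
Proof. exact/sym_connect_sym/adj_wo_sym. Qed.

Lemma edge_bridge i : ~~ connect (adj_wo i) (m i) (l i).
Proof.
apply/negP => mi_li.
suff /connected_edges_ge : connected_graph (l \o lift i) (m \o lift i).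
  by have := ltn_ord i; lia.
move=> u v; rewrite -(eq_connect (adj_wo_lift l m i)).
apply: (connect_sub _ (connected u v)) => x y.
case/(adj_woP i) => [xy | [-> ->] | [-> ->]] //.
- exact: connect1.
- by rewrite adj_wo_connect_sym.
Qed.

Lemma tailC_setC i : tailC i = ~: headC i.
Proof.
apply/setP => j; rewrite !inE; apply/idP/idP => [tj | hj].
  apply: contra (edge_bridge i) => hj; apply: connect_trans hj _.
  by rewrite adj_wo_connect_sym.
pose ht := [pred x | connect (adj_wo i) (m i) x || connect (adj_wo i) (l i) x].
have ht_closed : closed adj ht.
  apply: intro_closed; first exact/sym_connect_sym/adj_sym.
  move=> x y /(adj_woP i) [xy | [_ ->] | [_ ->]]; rewrite !inE ?connect0 ?orbT //.
  by case/orP => hx; apply/orP; [left | right]; apply: connect_trans hx (connect1 xy).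
have := closed_connect ht_closed (connected (m i) j).
by rewrite !inE connect0 (negbTE hj) => /esym.
Qed.

Lemma card_headC_tailC i : (#|headC i| + #|tailC i|)%N = n.+1.
Proof. by rewrite tailC_setC cardsC card_ord. Qed.

Lemma dist_across_edge i a b j :
  (a, b) = (l i, m i) \/ (a, b) = (m i, l i) ->
  connect (adj_wo i) a j -> dist j b = (dist j a).+1.
Proof.
move=> ab aj; have adj_ab : adj a b.
  by case: ab => -[-> ->]; [| rewrite adj_sym]; apply: adj_edge.
have not_ab : ~~ connect (adj_wo i) a b.
  by case: ab => -[-> ->]; [rewrite adj_wo_connect_sym |]; apply: edge_bridge.
apply/eqP; rewrite eqn_leq; apply/andP; split.
  rewrite -[(dist j a).+1]addn1; apply: dist_le.
  apply: walkb_cat (dist_walkb connected j a) _.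
  by apply/existsP; exists b; rewrite adj_ab /=.
have := dist_walkb connected j b; move: (dist j b) => t.
elim: t j aj => [|t IH] j aj /=; first by move/eqP=> jb; rewrite -jb aj in not_ab.
case/existsP => w /andP[jw wb].
have [jw' | [-> | jb]] : adj_wo i j w \/ (j = a \/ j = b).
- case: (adj_woP i jw) => [? | [-> _] | [-> _]]; [by left | right..];
  by case: ab => -[-> ->]; tauto.
- apply: leq_trans (IH w (connect_trans aj (connect1 jw')) wb).
  apply: (@dist_le _ _ _ _ (dist w a).+1) => /=.
  by apply/existsP; exists w; rewrite jw dist_walkb.
- by rewrite dist0.
- by rewrite -jb aj in not_ab.
Qed.

Lemma dist_headC i j : j \in headC i -> dist j (l i) = (dist j (m i)).+1.
Proof. by rewrite inE; apply: dist_across_edge; right. Qed.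

Lemma dist_tailC i j : j \in tailC i -> dist j (m i) = (dist j (l i)).+1.
Proof. by rewrite inE; apply: dist_across_edge; left. Qed.

Definition colour (j : 'I_n.+1) := odd (dist ord0 j).

Lemma colour_edge i : colour (l i) = ~~ colour (m i).
Proof.
rewrite /colour; have [/dist_headC -> //|] := boolP (ord0 \in headC i).
by rewrite -in_setC -tailC_setC => /dist_tailC ->; rewrite /= negbK.
Qed.

Lemma colour_adj x y : adj x y -> colour y = ~~ colour x.
Proof. by case/existsP=> i /orP[] /andP[/eqP<- /eqP<-]; rewrite colour_edge ?negbK. Qed.

Lemma odd_dist u v : odd (dist u v) = colour u (+) colour v.
Proof.
have := dist_walkb connected u v; move: (dist u v) => t.
elim: t u => [|t IH] u /=; first by move/eqP->; rewrite addbb.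
by case/existsP=> w /andP[/colour_adj uw /IH->]; rewrite uw addNb negbK.
Qed.

Variable R : numFieldType.
Local Notation M := (incidence R l m).
Local Notation H := (Hmat R l m).

Definition sgn (j : 'I_n.+1) : R := (-1) ^+ colour j.

Definition sgn_col : 'cV[R]_n.+1 := \col_j sgn j.

Lemma sgn_edge i : sgn (l i) = - sgn (m i).
Proof. by rewrite /sgn colour_edge signrN. Qed.

Lemma sgnK j : sgn j * sgn j = 1.
Proof. by rewrite /sgn -signr_addb addbb. Qed.

Lemma sign_dist u v : (-1) ^+ dist u v = sgn u * sgn v.
Proof. by rewrite -signr_odd odd_dist signr_addb. Qed.

Lemma HmatE i j : H i j = sgn j *
  if j \in headC i then sgn (m i) / n.+1%:R * #|tailC i|%:R
  else sgn (l i) / n.+1%:R * #|headC i|%:R.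
Proof.
rewrite mxE /dist_ve; case: ifP => [hj | /negbT].
  by rewrite dist_headC // minnC (minn_idPl (leqnSn _)) sign_dist !mulrA.
rewrite -in_setC -tailC_setC => tj.
by rewrite tj dist_tailC // (minn_idPl (leqnSn _)) sign_dist !mulrA.
Qed.

Lemma edge_ends_neq i : l i != m i.
Proof. by rewrite neq_ltn tree.1.1. Qed.

Lemma incidenceE j i : M j i = (j == l i)%:R + (j == m i)%:R.
Proof.
rewrite mxE; have [->|_] := eqVneq j (l i); last by rewrite add0r.
by rewrite (negbTE (edge_ends_neq i)) addr0.
Qed.

Lemma Hmat_incidence : H *m M = 1%:M.
Proof.
apply/matrixP => i i'; rewrite !mxE.
under eq_bigr do rewrite incidenceE mulrDr.
rewrite big_split /= !sum_delta !HmatE.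
have [<-|ii'] := eqVneq i i'.
  rewrite !inE connect0 (negbTE (edge_bridge i)) !mulrA !sgnK !mul1r -mulrDr -natrD.
  by rewrite card_headC_tailC mulVf ?pnatr_eq0.
have adj_wo_i' : adj_wo i (l i') (m i').
  by apply/existsP; exists i'; rewrite eq_sym ii' !eqxx.
rewrite !inE -(same_connect1r (adj_wo_connect_sym i) adj_wo_i') sgn_edge.
by case: ifP => _; rewrite !mulNr addNr.
Qed.

Lemma Hmat_sgn_col : H *m sgn_col = 0.
Proof.
apply/matrixP => i k; rewrite !mxE (bigID (mem (headC i))) /=.
under eq_bigr => j hj do rewrite HmatE mxE hj mulrAC sgnK mul1r.
rewrite [X in _ + X](eq_big (mem (tailC i)) (fun=> sgn (l i) / n.+1%:R * #|headC i|%:R)).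
- by rewrite !sumr_const sgn_edge; ring.
- by move=> j; rewrite tailC_setC !inE.
- by move=> j /negbTE hj; rewrite HmatE mxE hj mulrAC sgnK mul1r.
Qed.

Lemma sgn_col_incidence : sgn_col^T *m M = 0.
Proof.
apply/matrixP => k i; rewrite !mxE.
under eq_bigr do rewrite incidenceE !mxE mulrDr.
by rewrite big_split /= !sum_delta sgn_edge addNr.
Qed.

Lemma sgn_col_gram : sgn_col^T *m sgn_col = n.+1%:R%:M.
Proof.
apply/matrixP => a b; rewrite !ord1 !mxE eqxx mulr1n.
under eq_bigr do rewrite !mxE sgnK.
by rewrite sumr_const card_ord.
Qed.

Lemma incidence_Hmat : M *m H = 1%:M - n.+1%:R^-1 *: (sgn_col *m sgn_col^T).
Proof.
have left_inv : col_mx (n.+1%:R^-1 *: sgn_col^T) H *m row_mx sgn_col M = 1%:M.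
  rewrite mul_col_row -!scalemxAl sgn_col_gram sgn_col_incidence scaler0.
  rewrite Hmat_sgn_col Hmat_incidence (scalar_mx_block 1 n) scale_scalar_mx.
  by rewrite mulVf ?pnatr_eq0.
have := mulmx1C left_inv; rewrite mul_row_col => <-.
by rewrite scalemxAr addrAC subrr add0r.
Qed.

Lemma incidence_Hmat_sym : (M *m H)^T = M *m H.
Proof. by rewrite incidence_Hmat linearB /= trmx1 linearZ /= trmx_mul trmxK. Qed.

End Tree.

Theorem mainTheorem2 (R : realFieldType) (n : nat) (l m : 'I_n.-1 -> 'I_n) :
  (0 < n)%N -> is_tree l m ->
  moore_penrose (incidence R l m) (Hmat R l m).
Proof.
case: n l m => [//|n] l m _ tree; split.
- by rewrite -mulmxA Hmat_incidence ?mulmx1.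
- by rewrite Hmat_incidence ?mul1mx.
- exact: incidence_Hmat_sym.
- by rewrite Hmat_incidence ?trmx1.
Qed.
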